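(* For all $k,n\in\mathbb{Z}\setminus\{0\}$ with $n\ge k$, \[ W_v(T_n^0)\ge W_k\big(T_n^0;W_v(T_k^0)\big)\quad\text{componentwise.}\]
   Context: Let $c\ge1$. Let $G,F$ be CDFs of strictly positive random variables $A$ (interarrival) and $V$ (service), $\lambda=1/E[A]$, $\mu=1/E[V]$, $\lambda<c\mu$. Let $\mathcal{T}^0=\{T_n^0:n\in\mathbb{Z}\setminus\{0\}\}$ be a time-stationary renewal point process with inter-renewal CDF $G$, indexed $\dots<T_{-1}^0<0<T_1^0<\dots$ (indices ordered naturally); $T_n^{0,+}$ is the next point after $T_n^0$, $A_n=T_n^{0,+}-T_n^0$. Let $\mathcal{T}^i=\{T_n^i\}$, $i=1,\dots,c$, be i.i.d. time-stationary renewal processes with inter-renewal CDF $F$, independent of $\mathcal{T}^0$; $V_k^i=T_k^{i,+}-T_k^i$. $U^i(t)=\inf\{T_n^i:T_n^i>t\}-t$, $U(t)=(U^1(t),\dots,U^c(t))$, $U(s_-)$ its left limit. $\mathcal{S}$ sorts a vector ascending; $x^+$ componentwise positive part; $\mathbf{1}=(1,\dots,1)$, $\mathbf{e}_1=(1,0,\dots,0)$. Vacation system: customers arrive at the points of $\mathcal{T}^0$ and wait in a FCFS queue; at each point $T_k^i$, if the queue is nonempty just before, the head customer leaves the queue and is served by server $i$ for time $V_k^i$, otherwise server $i$ takes a vacation of length $V_k^i$. Its stationary queue length is $Q_v(t)=\sup_{s\le t}\big(|(s,t]\cap\mathcal{T}^0|-\sum_{i=1}^c|(s,t]\cap\mathcal{T}^i|\big)$.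 $D_n^0$ is the delay of the customer arriving at $T_n^0$; he leaves the queue at a point $T_k^{i(n)}=T_n^0+D_n^0$ and his service time is $V_n:=V_k^{i(n)}$. $W_v(T_n^0)=D_n^0\mathbf{1}+\mathcal{S}(U((T_n^0+D_n^0)_-))$. For $k\le n$ and nonnegative ascending $w\in\mathbb{R}^c$: $W_k(T_k^0;w)=w$, $W_k(T_n^{0,+};w)=\mathcal{S}\big((W_k(T_n^0;w)+V_n\mathbf{e}_1-A_n\mathbf{1})^+\big)$. *)

From HB Require Import structures.
From mathcomp Require Import all_boot all_order all_algebra.
From mathcomp Require Import finmap.
From mathcomp Require Import all_classical all_reals all_analysis.
Set Implicit Arguments. Unset Strict Implicit. Unset Printing Implicit Defensive.
Import Order.TTheory GRing.Theory Num.Theory numFieldNormedType.Exports.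
Local Open Scope classical_set_scope.
Local Open Scope ring_scope.

Section QueueDefs.
Variable R : realType.

(* A point process indexed by Z \ {0}: P : int -> R, the value at 0 is unused. *)

Definition nxt (n : int) : int := if n == -1 then 1 else n + 1.

(* a locally finite point process with infinitely many points on both sides,
   indexed ... < T_{-1} < 0 < T_1 < ... *)
Definition point_process (P : int -> R) : Prop :=
  [/\ (forall j : int, j != 0 -> P j < P (nxt j)),
      P (-1) < 0 /\ 0 < P 1,
      (forall M : R, exists j : int, j != 0 /\ M < P j) &
      (forall M : R, exists j : int, j != 0 /\ P j < M)].

Definition cnt (P : int -> R) (s t : R) : nat :=
  #|` fset_set [set j : int | j != 0 /\ s < P j <= t] |%fset.

Definition cntS (c : nat) (Ts : 'I_c -> int -> R) (s t : R) : nat :=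
  (\sum_(i < c) cnt (Ts i) s t)%N.

Definition Qset (c : nat) (T0 : int -> R) (Ts : 'I_c -> int -> R) (t : R)
  : set R :=
  [set (cnt T0 s t)%:R - (cntS Ts s t)%:R | s in [set s | s <= t]].

(* stationary queue length of the vacation system *)
Definition Qv (c : nat) (T0 : int -> R) (Ts : 'I_c -> int -> R) (t : R) : R :=
  sup (Qset T0 Ts t).

Definition Ures (P : int -> R) (t : R) : R :=
  inf [set P j | j in [set j : int | j != 0 /\ t < P j]] - t.

Definition Uleft (P : int -> R) (s : R) : R :=
  lim (Ures P @ s^'-) : R.

Definition sortv (x : seq R) : seq R := sort <=%R x.

Definition Wv (c : nat) (T0 : int -> R) (Ts : 'I_c -> int -> R)
  (D : int -> R) (n : int) : seq R :=
  map (fun u => D n + u)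
    (sortv [seq Uleft (Ts i) (T0 n + D n) | i <- enum 'I_c]).

Definition step (w : seq R) (v a : R) : seq R :=
  let w1 := if w is x :: w' then (x + v) :: w' else [::] in
  sortv [seq Num.max (x - a) 0 | x <- w1].

Fixpoint Wrec (T0 : int -> R) (V : int -> R) (k : int) (w : seq R) (m : nat)
  : seq R :=
  match m with
  | 0%N => w
  | m'.+1 => let j := iter m' nxt k in
             step (Wrec T0 V k w m') (V j) (T0 (nxt j) - T0 j)
  end.

(* number of points of Z \ {0} strictly after k up to n (k <= n nonzero) *)
Definition nsteps (k n : int) : nat :=
  (absz (n - k)%R - ((k < 0)%R && (0 < n)%R))%N.

Definition Wk (T0 V : int -> R) (k : int) (w : seq R) (n : int) : seq R :=
  Wrec T0 V k w (nsteps k n).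

Definition vge (x y : seq R) : bool := all2 (fun a b => b <= a) x y.

(* D is the delay of the customer arriving at T_n^0, served by server i:
   he leaves the queue at the Q_v(T_n^0)-th service point after T_n^0
   (FCFS), which is a point of server i. *)
Definition is_delay (c : nat) (T0 : int -> R) (Ts : 'I_c -> int -> R)
  (n : int) (d : R) (i : 'I_c) : Prop :=
  0 <= d /\
  (exists j : int, j != 0 /\ Ts i j = T0 n + d) /\
  (cntS Ts (T0 n) (T0 n + d))%:R = Qv T0 Ts (T0 n).

End QueueDefs.

From HB Require Import structures.
From mathcomp Require Import all_boot all_order all_algebra.
From mathcomp Require Import finmap.
From mathcomp Require Import all_classical all_reals all_analysis.
From mathcomp Require Import zify lra.
Set Implicit Arguments. Unset Strict Implicit. Unset Printing Implicit Defensive.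
Import Order.TTheory GRing.Theory Num.Theory.
Local Open Scope classical_set_scope.
Local Open Scope ring_scope.

(* The recursion map w |-> S((w + v e_1 - a 1)^+) is monotone for the
   componentwise order, because sorting is.  By induction on the number of
   arrivals it therefore suffices to compare one step: the recursion applied
   to W_v(T_n^0) is dominated by W_v at the next arrival.  Customer n leaves
   the queue at s = T_n^0 + D_n^0, a service point of server i(n); there the
   left residual of server i(n) is 0 and V_n is its full residual, while the
   other servers (which have no point at s) have left residual equal to their
   residual.  Hence the recursion step gives the sorted vector of
   (s + U^i(s) - T_{n+1}^0)^+.  Customers leave the queue in FCFS order, so
   the next departure s' = T_{n+1}^0 + D_{n+1}^0 is later than s, and the
   first point of server i at or after s' is no earlier than its first point
   after s. *)

Section All2.
Variables (T : Type) (r : rel T).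

Lemma all2_cons x y s t : all2 r (x :: s) (y :: t) = r x y && all2 r s t.
Proof. by []. Qed.

Lemma all2_refl : reflexive r -> forall s, all2 r s s.
Proof. by move=> rr; elim=> //= x s ->; rewrite rr. Qed.

Lemma all2_trans : transitive r ->
  forall s t u, all2 r s t -> all2 r t u -> all2 r s u.
Proof.
move=> tr; elim=> [|x s IH] [|y t] [|z u] //= /andP[rxy rst] /andP[ryz rtu].
by rewrite (tr _ _ _ rxy ryz) (IH _ _ rst rtu).
Qed.

Lemma all2_map (I : Type) (f g : I -> T) (s : seq I) :
  (forall i, r (f i) (g i)) -> all2 r (map f s) (map g s).
Proof. by move=> fg; elim: s => //= i s ->; rewrite fg. Qed.

Lemma all2_map_homo (T' : Type) (r' : rel T') (f : T -> T') :
  {homo f : x y / r x y >-> r' x y} ->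
  {homo map f : s t / all2 r s t >-> all2 r' s t}.
Proof.
by move=> fr; elim=> [|x s IH] [|y t] //= /andP[/fr -> /IH ->].
Qed.

Lemma all2_flip s t : all2 (fun x y => r y x) s t = all2 r t s.
Proof. by elim: s t => [|x s IH] [|y t] //=; rewrite IH. Qed.

End All2.

Section SortMono.
Variables (d : Order.disp_t) (T : orderType d).
Local Open Scope order_scope.

Lemma sort_cons (x : T) (s : seq T) :
  sort <=%O (x :: s) = merge <=%O [:: x] (sort <=%O s).
Proof.
have := merge_sorted le_total (isT : sorted <=%O [:: x]) (sort_sorted le_total s).
move=> /(sorted_sort le_trans) <-; apply/perm_sort_leP.
by rewrite perm_sym perm_merge /= perm_cons perm_sort.
Qed.

Lemma sort_cons_min (x : T) (s : seq T) :
  (forall y, y \in s -> x <= y) -> sort <=%O (x :: s) = x :: sort <=%O s.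
Proof.
move=> xs; rewrite sort_cons; apply: (@sorted_merge _ _ le_trans [:: x]).
rewrite /= path_min_sorted; first exact/sort_sorted/le_total.
by apply/allP => y; rewrite mem_sort; apply: xs.
Qed.

Lemma merge1_cons (x y : T) (s : seq T) :
  merge <=%O [:: x] (y :: s) =
  if x <= y then [:: x, y & s] else y :: merge <=%O [:: x] s.
Proof. by []. Qed.

Lemma merge1_mono (x y : T) (s t : seq T) :
  sorted <=%O s -> sorted <=%O t -> x <= y -> all2 <=%O s t ->
  all2 <=%O (merge <=%O [:: x] s) (merge <=%O [:: y] t).
Proof.
elim: s t x y => [|u s IH] [|v t] x y // ss st xy; first by rewrite /= xy.
rewrite all2_cons => /andP[uv st']; rewrite !merge1_cons.
have [ss' st''] := (path_sorted ss, path_sorted st).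
case: ifP => xu; case: ifP => yv; rewrite !all2_cons ?xy ?uv ?st' //.
- rewrite (le_trans xu uv) -[u :: s](@sorted_merge _ _ le_trans [:: u] s ss) IH //.
  by rewrite ltW // (le_lt_trans uv) // ltNge yv.
- rewrite -[v :: t](@sorted_merge _ _ le_trans [:: v] t st) IH ?(le_trans xy) //.
  by rewrite (le_trans _ xy) // ltW // ltNge xu.
- by rewrite IH.
Qed.

Lemma sort_mono (s t : seq T) :
  all2 <=%O s t -> all2 <=%O (sort <=%O s) (sort <=%O t).
Proof.
elim: s t => [|x s IH] [|y t] //= /andP[xy st].
by rewrite !sort_cons merge1_mono ?sort_sorted //; [exact: le_total..|exact: IH].
Qed.

End SortMono.

Lemma step_mono (R : realType) (v a : R) (w w' : seq R) :
  all2 <=%R w w' -> all2 <=%R (step w v a) (step w' v a).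
Proof.
move=> ww'; apply/sort_mono/(all2_map_homo (r := <=%R)).
  by move=> x y xy; rewrite le_max2 ?lerD2r.
by case: w w' ww' => [|x w] [|y w'] //; rewrite !all2_cons lerD2r.
Qed.

Lemma nxt_neq0 (j : int) : nxt j != 0.
Proof. by rewrite /nxt; case: ifP => /eqP; lia. Qed.

Lemma ltz_nxt (j : int) : j < nxt j.
Proof. by rewrite /nxt; case: ifP => /eqP; lia. Qed.

Lemma nxt_le (j k : int) : k != 0 -> j < k -> nxt j <= k.
Proof. by rewrite /nxt; case: ifP => /eqP; lia. Qed.

Lemma nxt_pred (j : int) : j != 0 -> exists2 p, p != 0 & nxt p = j.
Proof.
have [->|j1 j0] := eqVneq j 1; first by exists (-1).
by exists (j - 1); rewrite /nxt; [lia | case: ifP => /eqP; lia].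
Qed.

Lemma iter_nxt_neq0 (m : nat) (k : int) : k != 0 -> iter m nxt k != 0.
Proof. by case: m => [|m] //= _; exact: nxt_neq0. Qed.

Lemma iter_nxt (m : nat) (k : int) : k != 0 ->
  iter m nxt k = if (k < 0) && (- k <= m%:Z) then k + m%:Z + 1 else k + m%:Z.
Proof.
move=> k0; elim: m => [|m IH]; first by rewrite /=; case: ifP => /=; lia.
by rewrite iterS IH /nxt; repeat case: ifP; intros; lia.
Qed.

Lemma iter_nxt_nsteps (k n : int) : k != 0 -> n != 0 -> k <= n ->
  iter (nsteps k n) nxt k = n.
Proof.
move=> k0 n0 kn; rewrite iter_nxt // /nsteps.
by case: (ltP k 0); case: (ltP 0 n) => /=; repeat case: ifP; intros; lia.
Qed.

Lemma nsteps_gt0 (k n : int) : k != 0 -> n != 0 -> k < n -> (0 < nsteps k n)%N.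
Proof. by rewrite /nsteps; case: (ltP k 0); case: (ltP 0 n) => /=; lia. Qed.

Section PointProcess.
Variables (R : realType) (P : int -> R).
Hypothesis ppP : point_process P.

Lemma pp_lt_homo : {in [pred j : int | j != 0] &, {homo P : i j / i < j}}.
Proof.
move=> i j /[!inE] i0 j0 ij; have [Pnxt _ _ _] := ppP.
rewrite -(iter_nxt_nsteps i0 j0 (ltW ij)).
case: (nsteps i j) (nsteps_gt0 i0 j0 ij) => // m _.
elim: m => [|m IH]; first exact: Pnxt.
by rewrite iterS; apply: lt_trans IH (Pnxt _ (iter_nxt_neq0 m.+1 i0)).
Qed.

Lemma pp_le_mono : {in [pred j : int | j != 0] &, {mono P : i j / i <= j}}.
Proof. exact: le_mono_in pp_lt_homo. Qed.

Lemma pp_lt_mono : {in [pred j : int | j != 0] &, {mono P : i j / i < j}}.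
Proof. exact: leW_mono_in pp_le_mono. Qed.

Lemma pp_first_point (pr : R -> Prop) :
  (forall x y, x <= y -> pr x -> pr y) ->
  (exists2 j, j != 0 & pr (P j)) -> (exists2 j, j != 0 & ~ pr (P j)) ->
  exists jm, [/\ jm != 0, pr (P jm) & forall j, j != 0 -> pr (P j) -> P jm <= P j].
Proof.
move=> pr_up [j1 j10 pr1] [j0 j00 npr0].
have [jm [[jm0 prm] jm_min]] : exists jm, [set j | j != 0 /\ pr (P j)] jm /\
    forall j, [set j | j != 0 /\ pr (P j)] j -> jm <= j.
  apply: (@int_lbound_has_minimum _ j0); first by exists j1.
  move=> j [j0' prj]; apply: ltW; rewrite -pp_lt_mono //.
  by rewrite ltNge; apply: contra_notN npr0 => /pr_up; apply.
by exists jm; split => // j j0' prj; rewrite pp_le_mono //; exact: jm_min.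
Qed.

Lemma pp_first_point_ge (s : R) :
  exists jm, [/\ jm != 0, s <= P jm & forall j, j != 0 -> s <= P j -> P jm <= P j].
Proof.
have [_ _ above below] := ppP.
apply: (pp_first_point (pr := fun x => s <= x)); first by move=> x y /[swap]; exact: le_trans.
- by have [j [j0 sj]] := above s; exists j => //; exact: ltW.
- by have [j [j0 js]] := below s; exists j => //; apply/negP; rewrite -ltNge.
Qed.

Lemma pp_first_point_gt (s : R) :
  exists jm, [/\ jm != 0, s < P jm & forall j, j != 0 -> s < P j -> P jm <= P j].
Proof.
have [_ _ above below] := ppP.
apply: (pp_first_point (pr := fun x => s < x)); first by move=> x y /[swap]; exact: lt_le_trans.
- by have [j [j0 sj]] := above s; exists j.
- by have [j [j0 js]] := below s; exists j => //; apply/negP; rewrite -leNgt ltW.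
Qed.

Lemma UresE (t : R) (jf : int) :
  jf != 0 -> t < P jf -> (forall j, j != 0 -> t < P j -> P jf <= P j) ->
  Ures P t = P jf - t.
Proof.
move=> jf0 tjf jf_min; rewrite /Ures; congr (_ - _).
set E := [set P j | j in _].
have EPjf : E (P jf) by exists jf.
have lbE : lbound E (P jf) by move=> _ [j [j0 tj] <-]; exact: jf_min.
apply/le_anti; rewrite ge_inf //=; last by exists (P jf).
by apply: lb_le_inf; first by exists (P jf).
Qed.

Lemma UleftE (s : R) (jg : int) :
  jg != 0 -> s <= P jg -> (forall j, j != 0 -> s <= P j -> P jg <= P j) ->
  Uleft P s = P jg - s.
Proof.
move=> jg0 sjg jg_min; have [p p0 pjg] := nxt_pred jg0.
have Pps : P p < s.
  rewrite ltNge; apply/negP => /(jg_min p p0).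
  by rewrite -pjg leNgt pp_lt_mono ?ltz_nxt ?inE ?nxt_neq0.
have near_UresE : {near s^'-, (fun t => P jg - t) =1 Ures P}.
  near=> t.
  have Ppt : P p < t by near: t; exact: nbhs_left_gt.
  have ts : t < s by near: t; exact: nbhs_left_lt.
  apply/esym/UresE => //; first exact: lt_le_trans sjg.
  move=> j j0 tj; rewrite pp_le_mono // -pjg nxt_le //.
  by rewrite -pp_lt_mono //; exact: lt_trans tj.
apply: norm_cvg_lim; apply: cvg_trans (near_eq_cvg near_UresE) _.
by apply: cvg_at_left_filter; apply: cvgB; [exact: cvg_cst | exact: cvg_id].
Unshelve. all: by end_near.
Qed.

Lemma Uleft_ge0 (s : R) : 0 <= Uleft P s.
Proof.
have [jg [jg0 sjg jg_min]] := pp_first_point_ge s.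
by rewrite (UleftE jg0 sjg jg_min) subr_ge0.
Qed.

Lemma Uleft_point (j : int) : j != 0 -> Uleft P (P j) = 0.
Proof.
move=> j0; have [jg [jg0 sjg jg_min]] := pp_first_point_ge (P j).
rewrite (UleftE jg0 sjg jg_min); apply/eqP; rewrite subr_eq0 eq_le sjg andbT.
exact: jg_min.
Qed.

Lemma Uleft_Ures (s : R) : (forall j, j != 0 -> P j != s) -> Uleft P s = Ures P s.
Proof.
move=> s_notin; have [jg [jg0 sjg jg_min]] := pp_first_point_ge s.
have sjg' : s < P jg by rewrite lt_neqAle eq_sym s_notin.
rewrite (UleftE jg0 sjg jg_min) (UresE jg0 sjg') // => j j0 /ltW; exact: jg_min.
Qed.

Lemma Ures_le_Uleft (s s' : R) : s < s' -> s + Ures P s <= s' + Uleft P s'.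
Proof.
move=> ss'; have [jf [jf0 sjf jf_min]] := pp_first_point_gt s.
have [jg [jg0 sjg jg_min]] := pp_first_point_ge s'.
rewrite (UresE jf0 sjf jf_min) (UleftE jg0 sjg jg_min) !subrKC.
exact/jf_min/(lt_le_trans ss').
Qed.

Lemma cnt_finite (r t : R) : finite_set [set j : int | j != 0 /\ r < P j <= t].
Proof.
have [_ _ above below] := ppP.
have [[j0 [j00 Pj0]] [j1 [j10 Pj1]]] := (below r, above t).
apply: (sub_finite_set _ (finite_seq [seq j0 + k%:Z | k <- iota 0 `|j1 - j0|%N])).
move=> j /= [j0' /andP[rj jt]].
have j0j : j0 < j by rewrite -pp_lt_mono //; exact: lt_trans rj.
have jj1 : j < j1 by rewrite -pp_lt_mono //; exact: le_lt_trans Pj1.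
by apply/mapP; exists `|j - j0|%N; [rewrite mem_iota|]; lia.
Qed.

Lemma cnt_split (r a b : R) : r <= a -> a <= b ->
  cnt P r b = (cnt P r a + cnt P a b)%N.
Proof.
move=> ra ab; rewrite /cnt.
have -> : [set j : int | j != 0 /\ r < P j <= b] =
   [set j : int | j != 0 /\ r < P j <= a] `|` [set j : int | j != 0 /\ a < P j <= b].
  apply/seteqP; split => j /=.
    by move=> [j0 /andP[rj jb]]; case: (leP (P j) a) => ja; [left|right]; rewrite ?rj ?ja.
  move=> [] [j0 /andP[rj jb]]; split; rewrite // ?rj ?jb ?(le_trans jb ab) //.
  by rewrite (le_lt_trans ra rj).
rewrite fset_setU ?cardfsU -?fset_setI; try exact: cnt_finite.
have -> : [set j : int | j != 0 /\ r < P j <= a] `&` [set j : int | j != 0 /\ a < P j <= b] = set0.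
  by apply/seteqP; split => j //= [[_ /andP[_ ja]] [_ /andP[aj _]]]; move: ja; rewrite leNgt aj.
by rewrite fset_set0 cardfs0 subn0.
Qed.

Lemma cnt_nxt (n : int) : n != 0 -> cnt P (P n) (P (nxt n)) = 1%N.
Proof.
move=> n0; rewrite /cnt.
have -> : [set j : int | j != 0 /\ P n < P j <= P (nxt n)] = [set nxt n].
  apply/seteqP; split => j /=; last first.
    move=> ->; split; first exact: nxt_neq0.
    by rewrite lexx andbT pp_lt_mono ?ltz_nxt ?inE ?nxt_neq0.
  move=> [j0 /andP[nj jnxt]]; have nj' : n < j by rewrite -pp_lt_mono.
  by apply/le_anti; rewrite nxt_le // andbT -pp_le_mono ?inE ?nxt_neq0.
by rewrite fset_set1 cardfs1.
Qed.

End PointProcess.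

Lemma cntS_split (R : realType) (c : nat) (Ts : 'I_c -> int -> R) (r a b : R) :
  (forall i, point_process (Ts i)) -> r <= a -> a <= b ->
  cntS Ts r b = (cntS Ts r a + cntS Ts a b)%N.
Proof.
move=> ppTs ra ab; rewrite /cntS -big_split; apply: eq_bigr => i _.
exact: cnt_split.
Qed.

Section VacationSystem.
Variables (R : realType) (c : nat) (T0 : int -> R) (Ts : 'I_c -> int -> R).
Variables (D : int -> R) (srv : int -> 'I_c).
Hypotheses (ppT0 : point_process T0) (ppTs : forall i, point_process (Ts i)).
Hypothesis Ts_disjoint :
  forall i i' j j', i != i' -> j != 0 -> j' != 0 -> Ts i j != Ts i' j'.
Hypothesis Qset_ub : forall t, has_ubound (Qset T0 Ts t).
Hypothesis delayP : forall n, n != 0 -> is_delay T0 Ts n (D n) (srv n).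

Lemma T0_lt_nxt (n : int) : n != 0 -> T0 n < T0 (nxt n).
Proof. by move=> n0; rewrite (pp_lt_mono ppT0) ?ltz_nxt ?inE ?nxt_neq0. Qed.

Lemma Qv_nxt (n : int) : n != 0 ->
  Qv T0 Ts (T0 n) + 1 <= Qv T0 Ts (T0 (nxt n)) + (cntS Ts (T0 n) (T0 (nxt n)))%:R.
Proof.
move=> n0; set a := T0 n; set b := T0 (nxt n).
have ab : a <= b := ltW (T0_lt_nxt n0).
suff : Qv T0 Ts a <= Qv T0 Ts b + (cntS Ts a b)%:R - 1 by lra.
apply: ge_sup; first by exists ((cnt T0 a a)%:R - (cntS Ts a a)%:R); exists a => /=.
move=> _ [r /= ra <-].
have /(ub_le_sup (Qset_ub b)) : Qset T0 Ts b ((cnt T0 r b)%:R - (cntS Ts r b)%:R).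
  by exists r => //=; exact: le_trans ab.
rewrite (cnt_split ppT0 ra ab) (cntS_split ppTs ra ab) (cnt_nxt ppT0 n0) !natrD /Qv.
lra.
Qed.

Lemma departure_lt (n : int) : n != 0 -> T0 n + D n < T0 (nxt n) + D (nxt n).
Proof.
move=> n0; have [Dn0 [_ Qn]] := delayP n0; have [Dn1 [_ Qn1]] := delayP (nxt_neq0 n).
have Qstep := Qv_nxt n0; have ab := ltW (T0_lt_nxt n0).
rewrite ltNge; apply/negP => dep_le.
have b_le_dep : T0 (nxt n) <= T0 (nxt n) + D (nxt n) by rewrite lerDl.
rewrite (cntS_split ppTs (le_trans ab b_le_dep) dep_le) in Qn.
rewrite (cntS_split ppTs ab b_le_dep) !natrD in Qn.
have := ler0n R (cntS Ts (T0 (nxt n) + D (nxt n)) (T0 n + D n)); lra.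
Qed.

Lemma Wv_sortE (n : int) :
  Wv T0 Ts D n = sortv [seq D n + Uleft (Ts i) (T0 n + D n) | i <- enum 'I_c].
Proof. by rewrite /Wv /sortv (map_sort (leT' := <=%R) (lerD2l (D n))) -map_comp. Qed.

Lemma Wv_departure (n : int) : n != 0 ->
  Wv T0 Ts D n = D n :: [seq D n + u | u <- sortv
    [seq Ures (Ts i) (T0 n + D n) | i <- rem (srv n) (enum 'I_c)]].
Proof.
move=> n0; have [_ [[j [j0 Tsj]] _]] := delayP n0.
set s := T0 n + D n in Tsj *; set i0 := srv n in Tsj *.
have Uleft_i0 : Uleft (Ts i0) s = 0 by rewrite -Tsj (Uleft_point (ppTs i0)).
have Uleft_other i : i \in rem i0 (enum 'I_c) -> Uleft (Ts i) s = Ures (Ts i) s.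
  rewrite mem_rem_uniq ?enum_uniq // inE => /andP[ii0 _].
  apply: (Uleft_Ures (ppTs i)) => j' j'0; rewrite -Tsj; exact: Ts_disjoint.
rewrite /Wv /sortv -/s.
have /perm_sort_leP -> : perm_eq [seq Uleft (Ts i) s | i <- enum 'I_c]
    (Uleft (Ts i0) s :: [seq Uleft (Ts i) s | i <- rem i0 (enum 'I_c)]).
  exact: (perm_map (fun i => Uleft (Ts i) s) (perm_to_rem (mem_enum _ i0))).
rewrite sort_cons_min; last by move=> _ /mapP[i _ ->]; rewrite Uleft_i0 (Uleft_ge0 (ppTs i)).
rewrite /= Uleft_i0 addr0; congr (_ :: map _ (sort _ _)).
exact/eq_in_map.
Qed.

Lemma step_Wv (n : int) : n != 0 ->
  step (Wv T0 Ts D n) (Ures (Ts (srv n)) (T0 n + D n)) (T0 (nxt n) - T0 n) =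
  sortv [seq Num.max (x - (T0 (nxt n) - T0 n)) 0
        | x <- [seq D n + Ures (Ts i) (T0 n + D n) | i <- enum 'I_c]].
Proof.
move=> n0; rewrite Wv_departure // /step /sortv; apply/perm_sort_leP; apply: perm_map.
rewrite perm_sym; apply: perm_trans (perm_map _ (perm_to_rem (mem_enum _ (srv n)))) _.
rewrite /= perm_cons perm_sym.
apply: perm_trans (perm_map _ (permEl (perm_sort _ _))) _.
rewrite -map_comp; exact: perm_refl.
Qed.

Lemma step_Wv_le (n : int) : n != 0 ->
  all2 <=%R (step (Wv T0 Ts D n) (Ures (Ts (srv n)) (T0 n + D n)) (T0 (nxt n) - T0 n))
            (Wv T0 Ts D (nxt n)).
Proof.
move=> n0; rewrite step_Wv // Wv_sortE /sortv -map_comp.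
apply/sort_mono/all2_map => i /=.
have [Dn1 _] := delayP (nxt_neq0 n).
rewrite ge_max addr_ge0 ?(Uleft_ge0 (ppTs i)) // andbT.
have := Ures_le_Uleft (ppTs i) (departure_lt n0); lra.
Qed.

Lemma Wrec_le_Wv (k : int) (m : nat) : k != 0 ->
  all2 <=%R (Wrec T0 (fun j => Ures (Ts (srv j)) (T0 j + D j)) k (Wv T0 Ts D k) m)
            (Wv T0 Ts D (iter m nxt k)).
Proof.
move=> k0; elim: m => [|m IH] /=; first exact: all2_refl lexx _.
exact: all2_trans le_trans _ _ _ (step_mono _ _ IH) (step_Wv_le (iter_nxt_neq0 m k0)).
Qed.

End VacationSystem.

Theorem lemma2 (R : realType) (c : nat) (T0 : int -> R) (Ts : 'I_c -> int -> R)
  (D : int -> R) (srv : int -> 'I_c) :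
  (0 < c)%N ->
  point_process T0 ->
  (forall i, point_process (Ts i)) ->
  (* a.s. no common points between distinct processes *)
  (forall i j j', j != 0 -> j' != 0 -> T0 j != Ts i j') ->
  (forall i i' j j', i != i' -> j != 0 -> j' != 0 -> Ts i j != Ts i' j') ->
  (* stability: Q_v(t) is finite *)
  (forall t, has_ubound (Qset T0 Ts t)) ->
  (* D_n^0 is the delay of customer n, who is served by server srv n *)
  (forall n : int, n != 0 -> is_delay T0 Ts n (D n) (srv n)) ->
  forall k n : int, k != 0 -> n != 0 -> k <= n ->
    vge (Wv T0 Ts D n)
        (Wk T0 (fun m => Ures (Ts (srv m)) (T0 m + D m)) k (Wv T0 Ts D k) n).
Proof.
move=> _ ppT0 ppTs _ Ts_disjoint Qset_ub delayP k n k0 n0 kn.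
have := Wrec_le_Wv ppT0 ppTs Ts_disjoint Qset_ub delayP (nsteps k n) k0.
by rewrite /vge all2_flip iter_nxt_nsteps.
Qed.
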